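(* Let $G=(V,E)$ be a finite, simple, connected graph with $|V|\geq 3$ and let $d\in\mathrm{Der}(\mathcal{A}(G))$ with $d(e_i)=\sum_{k\in V}d_{ik}e_k$. Then: (i) for every $i\in V$, $d_{ii}=\frac{1}{2\deg(i)}\sum_{k\in\mathcal{N}(i)}d_{kk}$; (ii) if $i\sim_t j$ then $d_{ii}=d_{jj}$.
   Context: Throughout, $\mathbb{K}$ is a field of characteristic $0$. A graph $G=(V,E)$ has vertex set $V=\{1,\dots,n\}$ and is assumed finite, simple (no loops, no multiple edges) and connected. $\mathcal{N}(i)$ denotes the set of neighbors of vertex $i$, $\deg(i)=|\mathcal{N}(i)|$, and $(a_{ij})$ is the adjacency matrix ($a_{ij}=1$ if $i,j$ are adjacent, $0$ otherwise). The evolution algebra $\mathcal{A}(G)$ is the $\mathbb{K}$-algebra with basis $\{e_i: i\in V\}$ and product $e_i\cdot e_i=\sum_{k\in V}a_{ik}e_k=\sum_{k\in\mathcal{N}(i)}e_k$ and $e_i\cdot e_j=0$ for $i\neq j$. A derivation of $\mathcal{A}(G)$ is a linear map $d:\mathcal{A}(G)\to\mathcal{A}(G)$ with $d(u\cdot v)=d(u)\cdot v+u\cdot d(v)$ for all $u,v$; $\mathrm{Der}(\mathcal{A}(G))$ is the space of derivations, and for $d$ in it we write $d(e_i)=\sum_{k\in V}d_{ik}e_k$. Two vertices $i,j$ are twins, written $i\sim_t j$, if $\mathcal{N}(i)=\mathcal{N}(j)$. *)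

From HB Require Import structures.
From mathcomp Require Import all_boot all_order all_algebra.
Set Implicit Arguments. Unset Strict Implicit. Unset Printing Implicit Defensive.
Import GRing.Theory.
Local Open Scope ring_scope.

Definition simple_graph (n : nat) (e : rel 'I_n) : Prop :=
  (forall i j, e i j = e j i) /\ (forall i, ~~ e i i).

Definition connected_graph (n : nat) (e : rel 'I_n) : Prop :=
  forall i j, connect e i j.

Definition nbhd (n : nat) (e : rel 'I_n) (i : 'I_n) : {set 'I_n} := [set k | e i k].
Definition deg (n : nat) (e : rel 'I_n) (i : 'I_n) : nat := #|nbhd e i|.

Definition twins (n : nat) (e : rel 'I_n) (i j : 'I_n) : Prop := nbhd e i = nbhd e j.

(* Evolution algebra A(G): elements are coordinate row vectors u = sum_i u_i e_i;
   e_i e_i = sum_{k in N(i)} e_k, e_i e_j = 0 (i <> j), extended bilinearly: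
   (u . v)_k = sum_i u_i v_i a_{ik}. *)
Definition evmul (K : fieldType) (n : nat) (e : rel 'I_n) (u v : 'rV[K]_n) : 'rV[K]_n :=
  \row_k \sum_(i < n) u 0 i * v 0 i * (e i k)%:R.

(* A linear map d : A(G) -> A(G) is given by its matrix D with
   d(e_i) = sum_k D i k e_k, i.e. d(u) = u *m D (row-vector convention).
   D is a derivation iff d(u v) = d(u) v + u d(v) for all u, v. *)
Definition is_derivation (K : fieldType) (n : nat) (e : rel 'I_n) (D : 'M[K]_n) : Prop :=
  forall u v : 'rV[K]_n,
    evmul e u v *m D = evmul e (u *m D) v + evmul e u (v *m D).

From HB Require Import structures.
From mathcomp Require Import all_boot all_order all_algebra.
Import GRing.Theory.
Local Open Scope ring_scope.
Set Implicit Arguments.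

(* Writing a_ij for the adjacency matrix, the derivation rule on e_i e_i gives
   sum_k a_ik d_km = 2 d_ii a_im, and on e_k e_m (k <> m) it gives
   d_km a_mx + d_mk a_kx = 0 for all x. As no vertex is isolated, the latter
   forces d_km = -d_mk. Summing the former over m in N(i), the off-diagonal part
   of sum_{k,m in N(i)} d_km cancels, so 2 deg(i) d_ii = sum_{k in N(i)} d_kk.
   Twins have the same neighbourhood, hence the same right-hand side. *)

Lemma sum_skew_offdiag {R : comNzRingType} {n : nat} (A : {set 'I_n})
    (M : 'M[R]_n) :
  (forall k m, k != m -> M k m + M m k = 0) ->
  (\sum_(m in A) \sum_(k in A) M k m) *+ 2 = (\sum_(k in A) M k k) *+ 2.
Proof.
move=> skewM; rewrite mulr2n [X in X + _]exchange_big -big_split -sumrMnl /=.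
apply: eq_bigr => m Am; rewrite -big_split /= (bigD1 m) //= big1 ?addr0 //.
by move=> k /andP[_ km]; rewrite skewM // eq_sym.
Qed.

Lemma exists_neighbour (n : nat) (e : rel 'I_n) :
  (1 < n)%N -> connected_graph e -> forall i, exists k, e i k.
Proof.
move=> n_gt1 conn_e i; have n_gt0 := ltnW n_gt1.
have [j ji] : exists j : 'I_n, j != i.
  case: (eqVneq (Ordinal n_gt0) i) => [<-|]; last by exists (Ordinal n_gt0).
  by exists (Ordinal n_gt1).
case/connectP: (conn_e i j) => [[|k p]] /=.
  by move=> _ jE; rewrite jE eqxx in ji.
by case/andP=> ik _ _; exists k.
Qed.

Section EvolutionAlgebraDerivation.
Variables (K : fieldType) (n : nat) (e : rel 'I_n).

Lemma evmul_deltal i (v : 'rV[K]_n) k :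
  evmul e 'e_i v 0 k = v 0 i * (e i k)%:R.
Proof.
rewrite mxE (bigD1 i) //= big1 ?addr0; first by rewrite mxE !eqxx mul1r.
by move=> l /negbTE li; rewrite mxE eqxx li !mul0r.
Qed.

Lemma evmul_deltar i (v : 'rV[K]_n) k :
  evmul e v 'e_i 0 k = v 0 i * (e i k)%:R.
Proof.
rewrite mxE (bigD1 i) //= big1 ?addr0; first by rewrite mxE !eqxx mulr1.
by move=> l /negbTE li; rewrite mxE eqxx li mulr0 !mul0r.
Qed.

Lemma delta_mulmxE i (D : 'M[K]_n) m : (('e_i : 'rV_n) *m D) 0 m = D i m.
Proof. by rewrite -rowE mxE. Qed.

Variable D : 'M[K]_n.
Hypothesis derD : is_derivation e D.

Lemma derivation_square i m :
  \sum_k (e i k)%:R * D k m = D i i *+ 2 * (e i m)%:R.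
Proof.
have := congr1 (fun u : 'rV[K]_n => u 0 m) (derD 'e_i 'e_i).
rewrite mxE [in RHS]mxE evmul_deltal evmul_deltar !delta_mulmxE => sqE.
rewrite mulr2n mulrDl -sqE; apply: eq_bigr => k _.
by rewrite evmul_deltal mxE !eqxx mul1r.
Qed.

Lemma derivation_product x {k m} : k != m ->
  D k m * (e m x)%:R + D m k * (e k x)%:R = 0.
Proof.
move=> km; have := congr1 (fun u : 'rV[K]_n => u 0 x) (derD 'e_k 'e_m).
rewrite mxE [in RHS]mxE evmul_deltal evmul_deltar !delta_mulmxE => <-.
by rewrite big1 // => l _; rewrite evmul_deltal mxE eqxx (negbTE km) !mul0r.
Qed.

Hypothesis no_isolated : forall i, exists k, e i k.

Lemma derivation_skew k m : k != m -> D k m + D m k = 0.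
Proof.
move=> km; have [x mx] := no_isolated m.
have := derivation_product x km; rewrite mx mulr1.
case kx: (e k x); first by rewrite mulr1.
rewrite mulr0 addr0 => Dkm0; rewrite Dkm0 add0r.
have [y ky] := no_isolated k.
by have := derivation_product y km; rewrite Dkm0 mul0r add0r ky mulr1.
Qed.

Lemma derivation_nbhd_sum i :
  \sum_(m in nbhd e i) \sum_(k in nbhd e i) D k m = D i i *+ 2 *+ deg e i.
Proof.
rewrite /deg -sumr_const; apply: eq_bigr => m; rewrite inE => im.
have := derivation_square i m; rewrite im mulr1 => <-.
rewrite [RHS](bigID [in nbhd e i]) /= [X in _ + X]big1 ?addr0 => [|k].
- by apply: eq_bigr => k; rewrite inE => ->; rewrite mul1r.
- by rewrite inE => /negbTE->; rewrite mul0r.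
Qed.

Lemma derivation_diag_mean (char0 : [pchar K] =i pred0) i :
  D i i = (2 * deg e i)%:R^-1 * \sum_(k in nbhd e i) D k k.
Proof.
have nat_neq0 p : (p != 0)%N -> (p%:R : K) != 0.
  by move=> p0; rewrite (proj1 (pcharf0P K) char0).
have deg_gt0 : (0 < deg e i)%N.
  by have [x ix] := no_isolated i; apply/card_gt0P; exists x; rewrite inE.
have sum_diag : \sum_(k in nbhd e i) D k k = D i i *+ (2 * deg e i).
  apply: (mulIf (nat_neq0 2%N isT)); rewrite !mulr_natr.
  by rewrite -(sum_skew_offdiag _ _ derivation_skew) derivation_nbhd_sum mulrnA.
by rewrite sum_diag -[D i i *+ _]mulr_natl mulKf // nat_neq0 // muln_eq0 -lt0n deg_gt0.
Qed.

End EvolutionAlgebraDerivation.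

Theorem corollary3p2 (K : fieldType) (hK : [pchar K] =i pred0)
  (n : nat) (hn : (3 <= n)%N) (e : rel 'I_n)
  (hsimple : simple_graph e) (hconn : connected_graph e)
  (D : 'M[K]_n) (hD : is_derivation e D) :
  (forall i : 'I_n,
      D i i = (2 * deg e i)%:R^-1 * \sum_(k in nbhd e i) D k k)
  /\ (forall i j : 'I_n, twins e i j -> D i i = D j j).
Proof.
have no_isolated := exists_neighbour (ltnW hn) hconn.
have diag_mean := derivation_diag_mean hD no_isolated hK.
by split=> // i j twin_ij; rewrite !diag_mean /deg twin_ij.
Qed.
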